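(* Let $(X_{1,\infty},f_{1,\infty},\mu_{1,\infty})$ be a metric nonautonomous dynamical system and let $\mathcal{F}$ be a nonempty subset of $\mathcal{E}_{\max}$. Then \[ \mathcal{H}(\mathcal{F}):=\{\mathcal{Q}_{1,\infty}\in\mathcal{E}_{\max}\;:\;\exists\,\mathcal{P}_{1,\infty}\in\mathcal{F}\text{ with }h(f_{1,\infty};\mathcal{Q}_{1,\infty})\le h(f_{1,\infty};\mathcal{P}_{1,\infty})\} \] is an admissible class with $\mathcal{F}\subset\mathcal{H}(\mathcal{F})\subset\mathcal{E}_{\max}$. Consequently $\mathcal{E}(\mathcal{F})\subset\mathcal{H}(\mathcal{F})$ and \[ h_{\mathcal{E}(\mathcal{F})}(f_{1,\infty})=h_{\mathcal{H}(\mathcal{F})}(f_{1,\infty})=\sup_{\mathcal{P}_{1,\infty}\in\mathcal{F}}h(f_{1,\infty};\mathcal{P}_{1,\infty}). \]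
   Context: A metric NDS consists of probability spaces $(X_n,\mathcal{A}_n,\mu_n)$ and measurable maps $f_n:X_n\to X_{n+1}$ with $f_n\mu_n=\mu_{n+1}$; $f_k^n=f_{k+n-1}\circ\cdots\circ f_k$, $f_k^{-n}$ = preimage. $H_\mu(\mathcal{P})=-\sum_P\mu(P)\log\mu(P)$; $h(f_{1,\infty};\mathcal{P}_{1,\infty})=\limsup_n\frac1nH_{\mu_1}(\bigvee_{i=0}^{n-1}f_1^{-i}\mathcal{P}_{i+1})$; $h_{\mathcal{E}}(f_{1,\infty})=\sup_{\mathcal{P}_{1,\infty}\in\mathcal{E}}h(f_{1,\infty};\mathcal{P}_{1,\infty})$. $\mathcal{E}_{\max}$ is the class of all sequences $\{\mathcal{P}_n\}$ of finite measurable partitions of $X_n$ with $\sup_n\#\mathcal{P}_n<\infty$. An admissible class is a nonempty $\mathcal{E}\subset\mathcal{E}_{\max}$ such that (B) it is closed under passing to termwise coarser sequences and (C) $\mathcal{P}_{1,\infty}\in\mathcal{E}$, $m\ge1$ imply $\{\bigvee_{i=0}^{m-1}f_k^{-i}\mathcal{P}_{k+i}\}_{k\ge1}\in\mathcal{E}$ (together with (A): uniformly bounded cardinalities, which holds automatically in $\mathcal{E}_{\max}$). Intersections of admissible classes (when nonempty) are admissible; $\mathcal{E}(\mathcal{F})$ denotes the intersection of all admissible classes containing $\mathcal{F}$, the smallest admissible class containing $\mathcal{F}$. *)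

From HB Require Import structures.
From mathcomp Require Import all_boot all_order all_algebra.
From mathcomp Require Import finmap.
From mathcomp Require Import all_classical all_reals all_analysis.
Unset Printing Implicit Defensive.
Import Order.TTheory GRing.Theory Num.Theory.
Local Open Scope classical_set_scope.
Local Open Scope ring_scope.

Section NDS.
Context (R : realType) (d : nat -> measure_display)
        (X : forall n : nat, measurableType (d n)).

(* A (finite) sequence-indexed family of (candidate) partitions:
   P n is a set of subsets of X n.  Indices are 0-based: X 0 is X_1. *)
Definition pseq := forall n : nat, set (set (X n)).

Definition fin_meas_partition (n : nat) (P : set (set (X n))) : Prop :=
  [/\ finite_set P,
      (forall A, P A -> measurable A),
      (forall A, P A -> A !=set0),
      (forall A B, P A -> P B -> A `&` B !=set0 -> A = B)
    & \bigcup_(A in P) A = setT].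

Definition Emax : set pseq :=
  [set P | (forall n, @fin_meas_partition n (P n)) /\
           exists C : nat, forall n, (#|` fset_set (P n)|%fset <= C)%N].

Definition coarser (Q P : pseq) : Prop :=
  forall n A, P n A -> exists2 B, Q n B & A `<=` B.

Variable f : forall n, X n -> X n.+1.

Fixpoint fiter (k n : nat) : X k -> X (n + k) :=
  match n return X k -> X (n + k) with
  | 0 => id
  | m.+1 => fun x => f (m + k)%N (fiter k m x)
  end.

Definition ppreim {T U : Type} (g : T -> U) (P : set (set U)) : set (set T) :=
  [set C | exists2 A, P A & C = g @^-1` A /\ C !=set0].

Definition pjoin {T : Type} (P Q : set (set T)) : set (set T) :=
  [set C | exists A B, [/\ P A, Q B, C = A `&` B & C !=set0]].

(* \bigvee_{i=0}^{m-1} f_k^{-i} P_{k+i} *)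
Fixpoint jn (P : pseq) (k m : nat) : set (set (X k)) :=
  match m with
  | 0 => [set setT]
  | m'.+1 => pjoin (jn P k m') (ppreim (fiter k m') (P (m' + k)%N))
  end.

Definition admissible (E : set pseq) : Prop :=
  [/\ E !=set0,
      E `<=` Emax,
      (forall P Q, E P -> Emax Q -> coarser Q P -> E Q)
    & (forall P (m : nat), E P -> (1 <= m)%N ->
         E (fun k => jn P k m))].

Definition Ecl (F : set pseq) : set pseq :=
  [set P | forall E, admissible E -> F `<=` E -> E P].

Variable mu : forall n, probability (X n) R.

Definition Hent_gen (n : nat) (P : set (set (X n))) : R :=
  - (\sum_(A \in P) (fine (mu n A) * ln (fine (mu n A)))).

Definition hP (P : pseq) : \bar R :=
  limn_esup (fun n : nat => ((n%:R)^-1 * Hent_gen 0 (jn P 0 n))%:E).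

Definition hE (E : set pseq) : \bar R := ereal_sup [set hP P | P in E].

Definition Hcl (F : set pseq) : set pseq :=
  [set Q | Emax Q /\ exists2 P, F P & (hP Q <= hP P)%E].

End NDS.

Definition metric_NDS (R : realType) (d : nat -> measure_display)
  (X : forall n : nat, measurableType (d n))
  (mu : forall n, probability (X n) R) (f : forall n, X n -> X n.+1) : Prop :=
  (forall n, measurable_fun setT (f n)) /\
  (forall n (A : set (X n.+1)), measurable A -> mu n (f n @^-1` A) = mu n.+1 A).

From HB Require Import structures.
From mathcomp Require Import all_boot all_order all_algebra.
From mathcomp Require Import finmap.
From mathcomp Require Import all_classical all_reals all_analysis.
From mathcomp Require Import lra zify.
Import Order.TTheory GRing.Theory Num.Theory.
Local Open Scope classical_set_scope.

(* Refining a finite measurable partition can only increase its entropy, so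
   [h] does not increase when every partition of a sequence is made coarser.
   The [n]-fold join of the [m]-step joins of a sequence is refined by its own
   [(n + m - 1)]-fold join, and each further step of a join splits every block
   into at most [C] pieces (for [C] a bound on the cardinalities), raising the
   entropy by at most [C]; after division by [n] this bounded excess vanishes
   in the limsup.  Hence [H(F)] is closed under (B) and (C); being admissible
   and containing [F], it contains [E(F)], and the three suprema agree because
   every value of [h] on [H(F)] is dominated by a value on [F]. *)

Section Partition.
Context {T : Type}.
Implicit Types (P Q : set (set T)) (x y : T).

Definition coblock P x y := exists2 A, P A & A x /\ A y.

Definition refines Q P := forall C, Q C -> exists2 A, P A & C `<=` A.

Lemma coblock_setT x y : coblock [set setT] x y.
Proof. by exists setT. Qed.

Lemma coblock_pjoin P Q x y :
  coblock (pjoin P Q) x y <-> coblock P x y /\ coblock Q x y.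
Proof.
split.
  move=> [_ [A [B [PA QB -> _]]] [[Ax Bx] [Ay By]]].
  by split; [exists A | exists B].
move=> [[A PA [Ax Ay]] [B QB [Bx By]]].
exists (A `&` B); last by split.
by exists A, B; split => //; exists x.
Qed.

Lemma coblock_refines P Q :
  (forall C, Q C -> C !=set0) ->
  (forall A B, P A -> P B -> A `&` B !=set0 -> A = B) ->
  (forall x y, coblock Q x y -> coblock P x y) -> refines Q P.
Proof.
move=> Q0 dP hQP C QC; have [x Cx] := Q0 C QC.
have [A PA [Ax _]] := hQP x x (ex_intro2 _ _ C QC (conj Cx Cx)).
exists A => // y Cy.
have [A' PA' [A'x A'y]] := hQP x y (ex_intro2 _ _ C QC (conj Cx Cy)).
by rewrite (dP A A') //; exists x.
Qed.

End Partition.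

Lemma coblock_ppreim {T U : Type} (g : T -> U) (P : set (set U)) x y :
  coblock (ppreim g P) x y <-> coblock P (g x) (g y).
Proof.
split; first by move=> [_ [A PA [-> _]] [Ax Ay]]; exists A.
move=> [A PA [Ax Ay]]; exists (g @^-1` A) => //.
by exists A => //; split => //; exists x.
Qed.

Lemma finite_set_seq {T : choiceType} {S : set T} {s : seq T} :
  (forall x, S x -> x \in s) -> finite_set S.
Proof. by move=> hs; apply: (sub_finite_set _ (finite_seq s)) => x /hs. Qed.

Lemma card_fset_set_le_size {T : choiceType} {S : set T} {s : seq T} :
  finite_set S -> (forall x, S x -> x \in s) -> (#|` fset_set S| <= size s)%N.
Proof.
move=> fS hs; apply: uniq_leq_size; first exact: fset_uniq.
by move=> x; rewrite in_fset_set // inE => /hs.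
Qed.

Section MeasurablePartition.
Context {dd : measure_display} {T : measurableType dd}.
Implicit Types P Q : set (set T).

Definition mpartition P := fin_meas_partition (fun=> dd) (fun=> T) 0 P.

Lemma mpartition_cover {P} : mpartition P -> forall x, exists2 A, P A & A x.
Proof.
case=> _ _ _ _ cP x.
have : (\bigcup_(A in P) A) x by rewrite cP.
by case=> A PA Ax; exists A.
Qed.

Lemma mpartition_setT : [set: T] !=set0 -> mpartition [set setT].
Proof.
move=> [x0 _]; split.
- exact: finite_set1.
- by move=> A ->.
- by move=> A ->; exists x0.
- by move=> A B -> ->.
- by apply/seteqP; split => // x _; exists setT.
Qed.

Lemma mpartition_pjoin {P Q} : mpartition P -> mpartition Q ->
  mpartition (pjoin P Q) /\
  (#|` fset_set (pjoin P Q)| <= #|` fset_set P| * #|` fset_set Q|)%N.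
Proof.
move=> hP hQ; have cP := mpartition_cover hP; have cQ := mpartition_cover hQ.
case: hP => fP mP nP dP _; case: hQ => fQ mQ nQ dQ _.
pose s := [seq A `&` B | A <- enum_fset (fset_set P), B <- enum_fset (fset_set Q)].
have hs C : pjoin P Q C -> C \in s.
  by move=> [A [B [PA QB -> _]]]; apply: allpairs_f; rewrite in_fset_set // inE.
have fJ := finite_set_seq hs.
split; last first.
  by rewrite -(size_allpairs (fun A B => A `&` B)); apply: card_fset_set_le_size.
split => //.
- by move=> _ [A [B [PA QB -> _]]]; apply: measurableI; [apply: mP|apply: mQ].
- by move=> C [A [B [_ _ _ ?]]].
- move=> _ _ [A [B [PA QB -> _]]] [A' [B' [PA' QB' -> _]]] [x [[Ax Bx] [A'x B'x]]].
  rewrite (dP A A') //; last by exists x.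
  by rewrite (dQ B B') //; exists x.
- apply/seteqP; split => // x _.
  have [A PA Ax] := cP x; have [B QB Bx] := cQ x.
  by exists (A `&` B) => //; exists A, B; split => //; exists x.
Qed.

End MeasurablePartition.

Lemma mpartition_ppreim {dd dd' : measure_display} {T : measurableType dd}
    {U : measurableType dd'} {g : T -> U} {P : set (set U)} :
  measurable_fun setT g -> mpartition P ->
  mpartition (ppreim g P) /\ (#|` fset_set (ppreim g P)| <= #|` fset_set P|)%N.
Proof.
move=> mg hP; have cP := mpartition_cover hP.
case: hP => fP mP nP dP _.
pose s := [seq g @^-1` A | A <- enum_fset (fset_set P)].
have hs C : ppreim g P C -> C \in s.
  by move=> [A PA [-> _]]; apply: map_f; rewrite in_fset_set // inE.
have fJ := finite_set_seq hs.
split; last first.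
  by rewrite -(size_map (fun A => g @^-1` A)); apply: card_fset_set_le_size.
split => //.
- by move=> _ [A PA [-> _]]; rewrite -[_ @^-1` _]setTI; apply: mg => //; exact: mP.
- by move=> C [A PA [_ ?]].
- move=> _ _ [A PA [-> _]] [A' PA' [-> _]] [x [Ax A'x]].
  by rewrite (dP A A') //; exists (g x).
- apply/seteqP; split => // x _.
  have [A PA Ax] := cP (g x).
  by exists (g @^-1` A) => //; exists A => //; split => //; exists x.
Qed.

Lemma count_pjoin_sub {T : choiceType} {P Q : set (set T)} {A : set T} :
  (forall A B, P A -> P B -> A `&` B !=set0 -> A = B) -> P A ->
  finite_set (pjoin P Q) -> finite_set Q ->
  (count (fun C => `[< C `<=` A >]) (fset_set (pjoin P Q)) <= #|` fset_set Q|)%N.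
Proof.
move=> dP PA fJ fQ; rewrite -size_filter.
rewrite -(size_map (fun B => A `&` B) (enum_fset (fset_set Q))).
apply: uniq_leq_size; first by apply: filter_uniq; exact: fset_uniq.
move=> C; rewrite mem_filter => /andP [/asboolP CA].
rewrite in_fset_set //= in_setE => -[A' [B [PA' QB eC [x Cx]]]].
have A'A : A' = A.
  by apply: dP => //; exists x; split; [move: Cx; rewrite eC => -[] | exact: CA].
by rewrite eC A'A; apply: map_f; rewrite in_fset_set // in_setE.
Qed.

Section Scalar.
Context {R : realType}.
Local Open Scope ring_scope.

Lemma ler_sum_seq (I : eqType) (r : seq I) (F G : I -> R) :
  (forall i, i \in r -> F i <= G i) -> \sum_(i <- r) F i <= \sum_(i <- r) G i.
Proof. by move=> FG; rewrite !big_seq; apply: ler_sum. Qed.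

Lemma ler_mul_ln (q s : R) : 0 <= q -> q <= s -> q * ln q <= q * ln s.
Proof.
move=> q0 qs; have [->|qn0] := eqVneq q 0; first by rewrite !mul0r.
have qp : 0 < q by rewrite lt_def qn0 q0.
by rewrite ler_wpM2l // ler_ln // posrE (lt_le_trans qp).
Qed.

(* From [ln x <= x - 1] at [x = s / q]. *)
Lemma lerN_mul_ln (q s : R) : 0 <= q -> q <= s -> - (q * ln q) <= - (q * ln s) + s.
Proof.
move=> q0 qs; have [->|qn0] := eqVneq q 0.
  by rewrite !mul0r oppr0 add0r (le_trans q0 qs).
have qp : 0 < q by rewrite lt_def qn0 q0.
have sp : 0 < s by apply: lt_le_trans qs.
have h : ln (s / q) <= s / q - 1.
  have := @le_ln1Dx R (s / q - 1); rewrite [1 + _]addrC subrK; apply.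
  by have := divr_gt0 sp qp; lra.
rewrite ln_div ?posrE // in h.
have := ler_wpM2l q0 h.
rewrite mulrBr [q * (_ - 1)]mulrBr mulr1 mulrCA mulfV ?gt_eqF // mulr1; lra.
Qed.

End Scalar.

Section Entropy.
Context {dd : measure_display} {T : measurableType dd} {R : realType}
  (mu : probability T R).
Local Open Scope ring_scope.
Implicit Types (A C : set T) (P Q : set (set T)).

Definition pr A : R := fine (mu A).

Definition ent P : R := - \sum_(A \in P) pr A * ln (pr A).

Lemma pr_ge0 A : 0 <= pr A.
Proof. exact/fine_ge0/measure_ge0. Qed.

Lemma prE A : measurable A -> (pr A)%:E = mu A.
Proof. by move=> mA; rewrite fineK // fin_num_measure. Qed.

Lemma le_pr A C : measurable A -> measurable C -> A `<=` C -> pr A <= pr C.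
Proof.
by move=> mA mC AC; rewrite -lee_fin !prE //; apply: le_measure; rewrite ?inE.
Qed.

Lemma pr_sum_blocks {A P} : measurable A -> mpartition P ->
  (forall C, P C -> C `<=` A \/ A `&` C = set0) ->
  pr A = \sum_(C <- fset_set P) (if `[< C `<=` A >] then pr C else 0).
Proof.
move=> mA hP hA; case: (hP) => fP mP _ dP cP.
apply: EFin_inj; rewrite -sumEFin prE //.
have eA : A = \bigcup_(C in P) (A `&` C) by rewrite -setI_bigcupr cP setIT.
rewrite {1}eA measure_fin_bigcup //; last 2 first.
- by move=> C C' PC PC' [x [[_ Cx] [_ C'x]]]; apply: dP => //; exists x.
- by move=> C PC; apply: measurableI => //; apply: mP.
rewrite fsbig_finite //; apply: eq_big_seq => C; rewrite in_fset_set // inE => PC.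
case: asboolP => CA; first by rewrite setIidr //= prE //; apply: mP.
by case: (hA C PC) => [/CA[]|->]; rewrite ?measure0.
Qed.

Lemma pr_sum_mpartition P : mpartition P -> \sum_(A <- fset_set P) pr A = 1.
Proof.
move=> hP; have <- : pr setT = 1 by rewrite /pr probability_setT.
rewrite (pr_sum_blocks measurableT hP) //; last by left.
by apply: eq_bigr => C _; rewrite asboolT.
Qed.

Section Refinement.
Variables (P Q : set (set T)).
Hypotheses (hP : mpartition P) (hQ : mpartition Q) (QP : refines Q P).

Lemma refines_dichotomy A C : P A -> Q C -> C `<=` A \/ A `&` C = set0.
Proof.
move=> PA QC; case: hP => _ _ _ dP _; have [A' PA' CA'] := QP _ QC.
have [[x [Ax Cx]]|/set0P/negP/negbNE/eqP AC0] := pselect (A `&` C !=set0); last by right.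
by left; rewrite (dP A A') //; exists x; split => //; exact: CA'.
Qed.

Lemma pr_refines_block {A} : P A ->
  pr A = \sum_(C <- fset_set Q) (if `[< C `<=` A >] then pr C else 0).
Proof.
move=> PA; case: hP => _ mP _ _ _.
by apply: pr_sum_blocks => // [|C QC]; [exact: mP | exact: refines_dichotomy].
Qed.

Lemma sum_refines_regroup (G : set T -> R) :
  \sum_(C <- fset_set Q) G C =
  \sum_(A <- fset_set P) \sum_(C <- fset_set Q) (if `[< C `<=` A >] then G C else 0).
Proof.
case: hP => fP _ _ dP _; case: hQ => fQ _ nQ _ _.
rewrite exchange_big; apply: eq_big_seq => C; rewrite in_fset_set // inE => QC.
have [A0 PA0 CA0] := QP _ QC; have [x Cx] := nQ C QC.
rewrite (bigD1_seq A0) /= ?fset_uniq ?in_fset_set ?inE // asboolT //.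
rewrite big1_seq ?addr0 // => A /andP [AA0]; rewrite in_fset_set // inE => PA.
case: asboolP => // CA; case/eqP: AA0.
by apply: dP => //; exists x; split; [exact: CA | exact: CA0].
Qed.

Lemma ent_le_refines : ent P <= ent Q.
Proof.
case: (hP) => fP mP _ _ _; case: (hQ) => fQ mQ _ _ _.
rewrite /ent !fsbig_finite // lerN2 sum_refines_regroup.
apply: ler_sum_seq => A; rewrite in_fset_set // inE => PA.
rewrite [X in _ <= X * _](pr_refines_block PA) big_distrl /=.
apply: ler_sum_seq => C; rewrite in_fset_set // inE => QC.
case: asboolP => CA; last by rewrite mul0r.
by apply: ler_mul_ln; [exact: pr_ge0 | apply: le_pr => //; [exact: mQ | exact: mP]].
Qed.

(* Each block splitting into at most [K] pieces adds at most [K] (a crude but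
   sufficient substitute for [ln K]). *)
Lemma ent_refines_le_add (K : nat) :
  (forall A, P A -> (count (fun C => `[< C `<=` A >]) (fset_set Q) <= K)%N) ->
  ent Q <= ent P + K%:R.
Proof.
move=> hK; case: (hP) => fP mP _ _ _; case: (hQ) => fQ mQ _ _ _.
rewrite /ent !fsbig_finite // -sumrN sum_refines_regroup.
apply: (@le_trans _ _ (\sum_(A <- fset_set P) (- (pr A * ln (pr A)) + pr A * K%:R))).
  apply: ler_sum_seq => A; rewrite in_fset_set // inE => PA.
  apply: (@le_trans _ _ (\sum_(C <- fset_set Q)
     ((if `[< C `<=` A >] then - (pr C * ln (pr A)) else 0) +
      (if `[< C `<=` A >] then pr A else 0)))).
    apply: ler_sum_seq => C; rewrite in_fset_set // inE => QC.
    case: asboolP => CA; last by rewrite addr0.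
    by apply: lerN_mul_ln; [exact: pr_ge0 | apply: le_pr => //; [exact: mQ | exact: mP]].
  rewrite big_split /=; apply: lerD.
    rewrite [X in - (X * _)](pr_refines_block PA) big_distrl /= -sumrN.
    rewrite le_eqVlt; apply/orP; left; apply/eqP.
    by apply: eq_bigr => C _; case: asboolP => _; rewrite ?mul0r ?oppr0.
  rewrite -big_mkcond big_const_seq iter_addr_0 -(mulr_natr (pr A)).
  by apply: ler_wpM2l; [exact: pr_ge0 | rewrite ler_nat; apply: hK].
by rewrite big_split /= sumrN -big_distrl /= pr_sum_mpartition // mul1r lexx.
Qed.

End Refinement.

End Entropy.

Section LimnEsup.
Context {R : realType}.
Local Open Scope ereal_scope.
Implicit Types u v : (\bar R)^nat.

Lemma limn_esupE u : limn_esup u = ereal_inf (range (esups u)).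
Proof. by rewrite limn_esup_lim; apply: cvg_lim => //; exact: cvg_esups_inf. Qed.

Lemma esups_ge u n k : (n <= k)%N -> u k <= esups u n.
Proof. by move=> nk; apply: ereal_sup_ubound; exists k. Qed.

Lemma limn_esup_le_esups u n : limn_esup u <= esups u n.
Proof. by rewrite limn_esupE; apply: ereal_inf_lbound; exists n. Qed.

Lemma le_limn_esup u v : (forall n, u n <= v n) -> limn_esup u <= limn_esup v.
Proof.
move=> uv; rewrite [X in _ <= X]limn_esupE; apply: le_ereal_inf_tmp => _ [n _ <-].
apply: (le_trans (limn_esup_le_esups u n)); apply: ge_ereal_sup => _ [k nk <-].
by apply: le_trans (uv k) _; apply: esups_ge.
Qed.

Lemma limn_esup_meanDr (a : nat -> R) (K : R) : (0 <= K)%R ->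
  limn_esup (fun n => ((n%:R)^-1 * (a n + K))%:E) <=
  limn_esup (fun n => ((n%:R)^-1 * a n)%:E).
Proof.
move=> K0; apply/lee_addgt0Pr => e e0.
rewrite -leeBlDr // [X in _ <= X]limn_esupE; apply: le_ereal_inf_tmp => _ [n _ <-].
rewrite leeBlDr //.
pose M := maxn n (Num.truncn (K / e)).+1.
apply: (le_trans (limn_esup_le_esups _ M)).
apply: (@le_trans _ _ (esups (fun n => ((n%:R)^-1 * a n)%:E) M + e%:E)); last first.
  by rewrite leeD2r //; apply: nonincreasing_esups; rewrite leq_maxl.
apply: ge_ereal_sup => _ [k Mk <-] /=.
apply: (@le_trans _ _ (((k%:R)^-1 * a k)%:E + e%:E)); last first.
  by rewrite leeD2r //; apply: esups_ge.
have kp : (0 < k%:R :> R)%R.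
  by rewrite ltr0n; apply: leq_trans Mk; rewrite leq_max orbT.
have Kk : (K / e < k%:R)%R.
  apply: (lt_le_trans (truncnS_gt (K / e))).
  by rewrite ler_nat; apply: leq_trans Mk; rewrite leq_maxr.
rewrite -EFinD lee_fin mulrDr lerD2l mulrC ler_pdivrMr //.
by move: Kk; rewrite ltr_pdivrMr // mulrC => /ltW.
Qed.

End LimnEsup.

Lemma refines_pjoinl {T : Type} (P Q : set (set T)) : refines (pjoin P Q) P.
Proof. by move=> _ [A [B [PA _ -> _]]]; exists A => // x []. Qed.

Lemma probability_setT_neq0 {dd : measure_display} {T : measurableType dd}
    {R : realType} (mu : probability T R) : [set: T] !=set0.
Proof.
apply/set0P/eqP => T0; have := probability_setT mu.
by rewrite T0 measure0 => -[] /eqP; rewrite eq_sym oner_eq0.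
Qed.

Section Iterates.
Context {d : nat -> measure_display} {X : forall n : nat, measurableType (d n)}
  (f : forall n, X n -> X n.+1).

Local Notation fiter := (fiter d X f).
Local Notation jn := (jn d X f).

Lemma measurable_fiter : (forall n, measurable_fun setT (f n)) ->
  forall k n, measurable_fun setT (fiter k n).
Proof.
move=> mf k; elim=> [|n IH] /=; first exact: measurable_id.
exact: measurableT_comp (mf _) IH.
Qed.

Lemma coblock_jn (P : pseq d X) k m x y :
  coblock (jn P k m) x y <->
  (forall i, (i < m)%N -> coblock (P (i + k)%N) (fiter k i x) (fiter k i y)).
Proof.
elim: m => [|m IH] /=; first by split => // _; exact: coblock_setT.
rewrite coblock_pjoin coblock_ppreim IH; split.
  by move=> [h1 h2] i; rewrite ltnS leq_eqVlt => /orP [/eqP ->|] //; apply: h1.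
by move=> h; split => [i im|]; apply: h; rewrite // ltnW.
Qed.

Lemma coblock_eq_rect (P : pseq d X) a b (e : a = b) (u v : X a) :
  coblock (P b) (eq_rect a X u b e) (eq_rect a X v b e) <-> coblock (P a) u v.
Proof. by case: b / e. Qed.

Lemma f_eq_rect a b (e : a = b) (u : X a) :
  f b (eq_rect a X u b e) = eq_rect a.+1 X (f a u) b.+1 (congr1 S e).
Proof. by case: b / e. Qed.

Lemma fiterD k j i x (e : (i + j + k = i + (j + k))%N) :
  fiter (j + k) i (fiter k j x) = eq_rect _ X (fiter k (i + j) x) _ e.
Proof.
elim: i e => [|i IH] e /=; first by rewrite (eq_irrelevance e (erefl _)).
have e' : (i + j + k = i + (j + k))%N by rewrite addnA.
by rewrite (IH e') f_eq_rect (eq_irrelevance (congr1 S e') e).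
Qed.

End Iterates.

Arguments measurable_fiter {d X f}.

Section JoinEntropy.
Context {d : nat -> measure_display} {X : forall n : nat, measurableType (d n)}
  {f : forall n, X n -> X n.+1}.
Hypotheses (mf : forall n, measurable_fun setT (f n))
  (X_neq0 : forall n, [set: X n] !=set0).

Local Notation jn := (jn d X f).
Local Notation Emax := (Emax d X).

Lemma mpartition_jn {P : pseq d X} {C : nat} :
  (forall n, mpartition (P n)) -> (forall n, (#|` fset_set (P n)| <= C)%N) ->
  forall k m, mpartition (jn P k m) /\ (#|` fset_set (jn P k m)| <= C ^ m)%N.
Proof.
move=> hP hC k; elim=> [|m [IH1 IH2]] /=.
  by rewrite fset_set1 cardfs1 expn0; split => //; exact: mpartition_setT (X_neq0 k).
have [g1 g2] := mpartition_ppreim (measurable_fiter mf k m) (hP (m + k)%N).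
have [j1 j2] := mpartition_pjoin IH1 g1.
split => //; rewrite expnS mulnC; apply: (leq_trans j2).
by apply: leq_mul => //; exact: leq_trans g2 (hC _).
Qed.

Lemma Emax_jn {P : pseq d X} m : Emax P -> Emax (fun k => jn P k m).
Proof.
move=> [hP [C hC]]; split; first by move=> k; exact: (mpartition_jn hP hC k m).1.
by exists (C ^ m)%N => k; exact: (mpartition_jn hP hC k m).2.
Qed.

Context {R : realType} (mu : probability (X 0) R).
Local Open Scope ring_scope.

Lemma ent_jn_coarser (P Q : pseq d X) : Emax P -> Emax Q ->
  coarser d X Q P -> forall n, ent mu (jn Q 0 n) <= ent mu (jn P 0 n).
Proof.
move=> EP EQ QP n.
have [hQn hPn] := ((Emax_jn n EQ).1 0%N, (Emax_jn n EP).1 0%N).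
case: (hQn) => _ _ _ dQn _; case: (hPn) => _ _ nPn _ _.
apply: ent_le_refines hQn hPn _.
apply: coblock_refines => // x y /coblock_jn hxy; apply/coblock_jn => i /hxy.
by move=> [A PA [Ax Ay]]; have [B QB AB] := QP _ _ PA; exists B => //; split; apply: AB.
Qed.

(* One more step refines each block into at most [C] pieces. *)
Lemma ent_jnS {P : pseq d X} {C : nat} :
  (forall n, mpartition (P n)) -> (forall n, (#|` fset_set (P n)| <= C)%N) ->
  forall N, ent mu (jn P 0 N.+1) <= ent mu (jn P 0 N) + C%:R.
Proof.
move=> hP hC N.
have [hN _] := mpartition_jn hP hC 0 N; have [hSN _] := mpartition_jn hP hC 0 N.+1.
have [hg cg] := mpartition_ppreim (measurable_fiter mf 0 N) (hP (N + 0)%N).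
apply: ent_refines_le_add => //; first exact: refines_pjoinl.
move=> A hA; case: (hN) => _ _ _ dN _; case: (hSN) => fSN _ _ _ _; case: (hg) => fg _ _ _ _.
exact: leq_trans (count_pjoin_sub dN hA fSN fg) (leq_trans cg (hC _)).
Qed.

Lemma ent_jnD {P : pseq d X} {C : nat} :
  (forall n, mpartition (P n)) -> (forall n, (#|` fset_set (P n)| <= C)%N) ->
  forall n m, ent mu (jn P 0 (n + m)) <= ent mu (jn P 0 n) + (m * C)%:R.
Proof.
move=> hP hC n; elim=> [|m IH]; first by rewrite addn0 mul0n addr0.
rewrite addnS; apply: (le_trans (ent_jnS hP hC _)).
by move: IH; rewrite mulSn natrD; lra.
Qed.

(* The [n]-fold join of the [m.+1]-step joins is refined by the [(n + m)]-fold
   join of [P]: the indices [i + j] with [i < m.+1] and [j < n] stay below [n + m]. *)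
Lemma ent_jn_jn (P : pseq d X) m n : Emax P ->
  ent mu (jn (fun k => jn P k m.+1) 0 n) <= ent mu (jn P 0 (n + m)).
Proof.
move=> EP.
have [hQn hPn] := ((Emax_jn n (Emax_jn m.+1 EP)).1 0%N, (Emax_jn (n + m) EP).1 0%N).
case: (hQn) => _ _ _ dQn _; case: (hPn) => _ _ nPn _ _.
apply: ent_le_refines hQn hPn _.
apply: coblock_refines => // x y /coblock_jn hxy; apply/coblock_jn => j jn_.
apply/coblock_jn => i im.
have e : (i + j + 0 = i + (j + 0))%N by rewrite addnA.
rewrite !(fiterD f _ _ _ _ e); apply/coblock_eq_rect; apply: hxy.
by rewrite ltnS in im; lia.
Qed.

End JoinEntropy.

Section EntropyRate.
Context {R : realType} {d : nat -> measure_display}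
  {X : forall n : nat, measurableType (d n)}
  (mu : forall n, probability (X n) R) {f : forall n, X n -> X n.+1}.
Hypothesis mf : forall n, measurable_fun setT (f n).

Local Notation Emax := (Emax d X).
Local Notation jn := (jn d X f).
Local Notation hP := (hP R d X f mu).
Local Notation hE := (hE R d X f mu).
Local Notation Hcl := (Hcl R d X f mu).

Let X_neq0 n : [set: X n] !=set0 := probability_setT_neq0 (mu n).

Lemma hPE P :
  hP P = limn_esup (fun n => ((n%:R)^-1 * ent (mu 0) (jn P 0 n))%:E).
Proof. by []. Qed.

Lemma hP_coarser {P Q} : Emax P -> Emax Q -> coarser d X Q P -> (hP Q <= hP P)%E.
Proof.
move=> EP EQ QP; rewrite !hPE; apply: le_limn_esup => n.
rewrite lee_fin; apply: ler_wpM2l; first by rewrite invr_ge0.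
exact (ent_jn_coarser mf X_neq0 (mu 0) P Q EP EQ QP n).
Qed.

Lemma hP_jn {P} m : Emax P -> (hP (fun k => jn P k m.+1) <= hP P)%E.
Proof.
move=> EP; have [hPn [C hC]] := EP; rewrite !hPE.
refine (le_trans _ (limn_esup_meanDr (fun n => ent (mu 0) (jn P 0 n))
  (m * C)%:R (ler0n _ _))).
apply: le_limn_esup => n; rewrite lee_fin; apply: ler_wpM2l; first by rewrite invr_ge0.
exact (le_trans (ent_jn_jn mf X_neq0 (mu 0) P m n EP)
  (ent_jnD mf X_neq0 (mu 0) hPn hC n m)).
Qed.

Lemma sub_Hcl {F} : F `<=` Emax -> F `<=` Hcl F.
Proof. by move=> FE P FP; split; [exact: FE | exists P]. Qed.

Lemma Hcl_admissible {F} : F !=set0 -> F `<=` Emax -> admissible d X f (Hcl F).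
Proof.
move=> [P FP] FE; split.
- by exists P; exact: sub_Hcl.
- by move=> Q [].
- move=> Q Q' [EQ [P' FP' QP']] EQ' Q'Q; split => //; exists P' => //.
  exact (le_trans (hP_coarser EQ EQ' Q'Q) QP').
- move=> Q [|m] [EQ [P' FP' QP']] // _; split; first exact: Emax_jn.
  by exists P' => //; exact (le_trans (hP_jn m EQ) QP').
Qed.

Lemma le_hE {E E'} : E `<=` E' -> (hE E <= hE E')%E.
Proof. by move=> EE'; apply: ereal_sup_le => _ [P EP <-]; exists P => //; exact: EE'. Qed.

Lemma hE_Hcl {F} : F `<=` Emax -> hE (Hcl F) = hE F.
Proof.
move=> FE; apply/le_anti/andP; split; last exact/le_hE/sub_Hcl.
apply: ge_ereal_sup => _ [Q [_ [P FP QP]] <-].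
by refine (le_trans QP _); apply: ereal_sup_ubound; exists P.
Qed.

End EntropyRate.

Theorem mainTheorem11 (R : realType) (d : nat -> measure_display)
  (X : forall n : nat, measurableType (d n))
  (mu : forall n, probability (X n) R) (f : forall n, X n -> X n.+1)
  (hNDS : metric_NDS R d X mu f)
  (F : set (pseq d X)) (hF0 : F !=set0) (hF : F `<=` Emax d X) :
  [/\ admissible d X f (Hcl R d X f mu F),
      F `<=` Hcl R d X f mu F /\ Hcl R d X f mu F `<=` Emax d X,
      Ecl d X f F `<=` Hcl R d X f mu F,
      hE R d X f mu (Ecl d X f F) = hE R d X f mu (Hcl R d X f mu F)
    & hE R d X f mu (Hcl R d X f mu F) = ereal_sup [set hP R d X f mu P | P in F]].
Proof.
have [mf _] := hNDS.
have HF := Hcl_admissible mu mf hF0 hF.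
have FE : F `<=` Ecl d X f F by move=> P FP E _; apply.
have EH : Ecl d X f F `<=` Hcl R d X f mu F by move=> P EP; apply: EP => //; exact: sub_Hcl.
split => //.
- by split; [exact: sub_Hcl | move=> P []].
- apply/le_anti/andP; split; first exact: le_hE.
  by rewrite (hE_Hcl mu hF); exact: le_hE.
- exact: hE_Hcl.
Qed.
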